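(* Let $\mathcal{M}$ be a bounded graph matroid family. If there is a small $\mathcal{M}$-circuit with minimum degree one, then there exists an integer $m\ge2$ such that the star $K_{1,m}$ is the unique (up to isomorphism) small $\mathcal{M}$-circuit with at most $m$ edges and with minimum degree one.
   Context: All graphs are finite and simple and have no isolated vertices. A graph matroid family $\mathcal{M}$ assigns to every graph $G$ a matroid $\mathcal{M}(G)$ on $E(G)$ such that (i) every graph isomorphism $V(G)\to V(H)$ induces an isomorphism $\mathcal{M}(G)\to\mathcal{M}(H)$, and (ii) for every subgraph $H$ of $G$, $\mathcal{M}(H)$ is the restriction of $\mathcal{M}(G)$ to $E(H)$. Let $r(G)$ be the rank of $\mathcal{M}(G)$. $\mathcal{M}$ is bounded if $r(K_n)$ is bounded in $n$; its limit is the rank $r(\mathcal{M})$. An $\mathcal{M}$-circuit is a graph $G$ with $r(G)<|E(G)|$ and $r(G-e)=|E(G)|-1$ for all $e\in E(G)$; it is small if it has at most $r(\mathcal{M})$ edges. *)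

From mathcomp Require Import all_boot.
From mathcomp Require Import finmap.
Set Implicit Arguments.
Unset Strict Implicit.
Unset Printing Implicit Defensive.
Local Open Scope fset_scope.

(* A graph is given by its edge set: a finite set of 2-element sets of
   vertices (vertices are natural numbers).  Its vertex set is the union of
   its edges, so graphs have no isolated vertices by construction. *)
Definition graph := {fset {fset nat}}.

Definition is_graph (G : graph) : Prop := forall e, e \in G -> #|` e| = 2.

Definition vertices (G : graph) : {fset nat} := \bigcup_(e <- G) e.

Definition deg (G : graph) (v : nat) : nat := #|` [fset e in G | v \in e]|.

Definition min_deg_one (G : graph) : Prop :=
  (exists v, v \in vertices G /\ deg G v = 1) /\
  (forall v, v \in vertices G -> 1 <= deg G v).

(* H is a subgraph of G (no isolated vertices, so determined by edges) *)
Definition subgraph (H G : graph) : Prop := is_graph H /\ H `<=` G.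

Definition gmap (f : nat -> nat) (X : {fset {fset nat}}) : {fset {fset nat}} :=
  (fun e : {fset nat} => f @` e) @` X.

Definition graph_iso (f : nat -> nat) (G H : graph) : Prop :=
  {in vertices G &, injective f} /\
  f @` vertices G = vertices H /\
  gmap f G = H.

Definition isomorphic (G H : graph) : Prop := exists f, graph_iso f G H.

Definition K (n : nat) : graph :=
  [fset e in fpowerset [fset x | x in iota 0 n] | #|` e| == 2].

Definition star (m : nat) : graph :=
  (fun i : nat => [fset 0; i]) @` [fset x | x in iota 1 m].

Definition is_matroid (E : {fset {fset nat}}) (I : {fset {fset nat}} -> bool)
  : Prop :=
  [/\ I fset0,
      (forall X, I X -> X `<=` E),
      (forall X Y, I Y -> X `<=` Y -> I X) &
      (forall X Y, I X -> I Y -> #|` X| < #|` Y| ->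
         exists2 y, y \in Y `\` X & I (y |` X))].

(* A graph matroid gm_family: M G is the independence predicate of M(G). *)
Definition gm_family := graph -> {fset {fset nat}} -> bool.

Definition graph_matroid_family (M : gm_family) : Prop :=
  [/\ (forall G, is_graph G -> is_matroid G (M G)),
      (forall f G H, is_graph G -> is_graph H -> graph_iso f G H ->
         forall X, X `<=` G -> M H (gmap f X) = M G X) &
      (forall G H, is_graph G -> subgraph H G ->
         forall X, X `<=` H -> M H X = M G X)].

Definition rk (M : gm_family) (G : graph) : nat :=
  \max_(X <- fpowerset G | M G X) #|` X|.

Definition bounded (M : gm_family) : Prop :=
  exists B, forall n, rk M (K n) <= B.

Definition limit_rank (M : gm_family) (L : nat) : Prop :=
  exists N, forall n, N <= n -> rk M (K n) = L.

Definition circuit (M : gm_family) (G : graph) : Prop :=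
  rk M G < #|` G| /\ (forall e, e \in G -> rk M (G `\ e) = #|` G| - 1).

Definition small_circuit (M : gm_family) (L : nat) (G : graph) : Prop :=
  circuit M G /\ #|` G| <= L.

(* A circuit G with a pendant edge uv makes the star with #|G| edges
   dependent: augmenting the independent set G - uv from an independent star
   at u with fresh leaves would add an edge uw, and G - uv + uw is isomorphic
   to G.  So there is a least m with K_{1,m} dependent; K_{1,m} is then a
   circuit, and m >= 2 because single edges of a maximum independent set of
   K_N are independent.  A small circuit G with a pendant edge uv and at most
   m edges has exactly m edges, and every edge a of G contains u: for the star
   S at u with m - 1 fresh leaves, a + S is dependent by the same exchange,
   whereas augmenting S from a fresh copy of a maximum independent set of K_N
   yields an independent S + e with e disjoint from S, which is isomorphic to
   a + S.  Hence G is a star. *)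

From mathcomp Require Import all_boot.
From mathcomp Require Import finmap.
Set Implicit Arguments.
Unset Strict Implicit.
Unset Printing Implicit Defensive.
Local Open Scope fset_scope.

Lemma edge_other (e : {fset nat}) a : #|` e| = 2 -> a \in e ->
  exists2 b, b != a & e = [fset a; b].
Proof.
move=> e2 ae; have := cardfsD1 a e; rewrite ae e2 => -[] /esym/eqP/cardfs1P [b eDa].
have /fsetD1P [ba _] : b \in e `\ a by rewrite eDa fset11.
by exists b; rewrite // -(fsetD1K ae) eDa.
Qed.

Lemma card2P (e : {fset nat}) : #|` e| = 2 -> exists p q, p != q /\ e = [fset p; q].
Proof.
move=> e2; have /fset0Pn [p pe] : e != fset0 by rewrite -cardfs_gt0 e2.
by have [q qp ->] := edge_other e2 pe; exists p, q; rewrite eq_sym.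
Qed.

Lemma fset2E (e : {fset nat}) a b : #|` e| = 2 -> a \in e -> b \in e -> a != b ->
  e = [fset a; b].
Proof.
move=> e2 ae be ab; apply/eqP; rewrite eq_sym eqEfcard e2 cardfs2 ab leqnn andbT.
by rewrite fsubUset !fsub1set ae be.
Qed.

Lemma verticesP (G : graph) x : reflect (exists2 e, e \in G & x \in e) (x \in vertices G).
Proof.
apply: (iffP (@bigfcupP _ _ G x id xpredT)) => [[e /andP [eG _] xe] | [e eG xe]].
  by exists e.
by exists e; rewrite ?eG.
Qed.

Lemma vertices_gmap f (G : graph) : vertices (gmap f G) = f @` vertices G.
Proof.
apply/fsetP => x; apply/verticesP/imfsetP => [[_ /imfsetP [e /= eG ->]]|].
  by case/imfsetP => y /= ye ->; exists y => //; apply/verticesP; exists e.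
case=> y /= /verticesP [e eG ye] ->; exists (f @` e); first exact: in_imfset.
exact: in_imfset.
Qed.

Lemma gmap_id_in f (G : graph) : {in vertices G, f =1 id} -> gmap f G = G.
Proof.
move=> fid; rewrite -[RHS]imfset_id; apply: eq_in_imfset => e eG.
by rewrite -[RHS]imfset_id; apply: eq_in_imfset => x xe; apply: fid; apply/verticesP; exists e.
Qed.

Lemma is_graph_sub (G H : graph) : is_graph G -> H `<=` G -> is_graph H.
Proof. by move=> gG /fsubsetP HG e /HG; apply: gG. Qed.

Lemma is_graphU (G H : graph) : is_graph G -> is_graph H -> is_graph (G `|` H).
Proof. by move=> gG gH e /fsetUP []; [apply: gG | apply: gH]. Qed.

Lemma is_graph_gmap f (G : graph) :
  is_graph G -> {in vertices G &, injective f} -> is_graph (gmap f G).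
Proof.
move=> gG finj _ /imfsetP [e /= eG ->]; rewrite card_in_imfset ?gG // => x y xe ye.
by apply: finj; apply/verticesP; exists e.
Qed.

Lemma graph_iso_gmap f (G : graph) :
  {in vertices G &, injective f} -> graph_iso f G (gmap f G).
Proof. by move=> finj; split; rewrite ?vertices_gmap. Qed.

Lemma card_gmap f (G : graph) :
  {in vertices G &, injective f} -> #|` gmap f G| = #|` G|.
Proof.
move=> finj; have sub e1 e2 : e1 \in G -> e2 \in G -> f @` e1 `<=` f @` e2 -> e1 `<=` e2.
  move=> e1G e2G /fsubsetP fe12; apply/fsubsetP => x xe1.
  have /fe12 /imfsetP [y /= ye2 fxy] : f x \in f @` e1 by apply: in_imfset.
  by rewrite (finj x y) //; apply/verticesP; [exists e1 | exists e2].
rewrite card_in_imfset // => e1 e2 e1G e2G /= fe12.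
by apply/eqP; rewrite eqEfsubset (sub e1 e2) ?(sub e2 e1) ?fe12.
Qed.

Section MatroidRank.
Variables (E : {fset {fset nat}}) (I : {fset {fset nat}} -> bool).
Hypothesis matE : is_matroid E I.

Let rank := \max_(X <- fpowerset E | I X) #|` X|.

Lemma matroid_rank_attained : exists2 X, X `<=` E & I X /\ rank = #|` X|.
Proof.
case: matE => I0 _ _ _; have E0 : fset0 \in fpowerset E by rewrite fpowersetE fsub0set.
rewrite /rank big_seq_fsetE (bigmax_eq_arg [` E0]) //=.
by case: arg_maxnP => //= X IX _; exists (val X); rewrite -?fpowersetE ?(valP X).
Qed.

Lemma matroid_rank_le_card : rank <= #|` E|.
Proof.
by apply/bigmax_leqP_seq => X; rewrite fpowersetE => XE _; apply: fsubset_leq_card.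
Qed.

Lemma matroid_rank_eq_card : (rank == #|` E|) = I E.
Proof.
apply/eqP/idP => [|IE]; last first.
  apply/eqP; rewrite eqn_leq matroid_rank_le_card.
  by rewrite /rank (leq_bigmax_seq (F := fun X : {fset {fset nat}} => #|` X|)) ?fpowersetE.
have [X XE [IX ->]] := matroid_rank_attained => XEcard.
by have /eqP <- : X == E by rewrite eqEfcard XE XEcard /=.
Qed.

End MatroidRank.

Definition indep (M : gm_family) (X : graph) : bool := M X X.

Section GraphMatroidFamily.
Variable M : gm_family.
Hypothesis hM : graph_matroid_family M.

Lemma indepE (G X : graph) : is_graph G -> X `<=` G -> M G X = indep M X.
Proof.
case: hM => _ _ Mres gG XG; rewrite /indep (Mres G X) //.
by split; first exact: is_graph_sub XG.
Qed.

Lemma indep0 : indep M fset0.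
Proof.
case: hM => Mmat _ _; have g0 : is_graph fset0 by move=> e; rewrite inE.
by case: (Mmat _ g0).
Qed.

Lemma indep_sub (X Y : graph) : is_graph Y -> indep M Y -> X `<=` Y -> indep M X.
Proof.
move=> gY iY XY; case: hM => Mmat _ _; case: (Mmat Y gY) => _ _ Mdown _.
by rewrite -(indepE gY XY); apply: Mdown iY XY.
Qed.

Lemma indep_aug (X Y : graph) : is_graph X -> is_graph Y -> indep M X -> indep M Y ->
  #|` X| < #|` Y| -> exists2 y, y \in Y `\` X & indep M (y |` X).
Proof.
move=> gX gY iX iY XY; have gXY := is_graphU gX gY.
case: hM => Mmat _ _; case: (Mmat _ gXY) => _ _ _ Maug.
have [y yYX My] : exists2 y, y \in Y `\` X & M (X `|` Y) (y |` X).
  by apply: Maug XY; rewrite (indepE gXY) ?fsubsetUl ?fsubsetUr.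
exists y => //; rewrite -(indepE gXY) // fsubUset fsubsetUl fsub1set andbT.
by case/fsetDP: yYX => yY _; rewrite inE yY orbT.
Qed.

Lemma indep_iso f (G H : graph) : is_graph G -> graph_iso f G H -> indep M H = indep M G.
Proof.
move=> gG fiso; case: hM => _ Miso _; have [finj [_ fG]] := fiso.
have gH : is_graph H by rewrite -fG; apply: is_graph_gmap.
by rewrite /indep -(Miso f G H gG gH fiso G) ?fG.
Qed.

Lemma indep_gmap f (G : graph) :
  is_graph G -> {in vertices G &, injective f} -> indep M (gmap f G) = indep M G.
Proof. by move=> gG finj; apply: indep_iso gG (graph_iso_gmap finj). Qed.

Lemma indep_isomorphic (G H : graph) : is_graph G -> isomorphic G H -> indep M H = indep M G.
Proof. by move=> gG [f fiso]; apply: indep_iso gG fiso. Qed.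

Lemma rk_eq_card (G : graph) : is_graph G -> (rk M G == #|` G|) = indep M G.
Proof. by case: hM => Mmat _ _ gG; apply: matroid_rank_eq_card; apply: Mmat. Qed.

Lemma rk_le_card (G : graph) : is_graph G -> rk M G <= #|` G|.
Proof. by case: hM => Mmat _ _ gG; apply: matroid_rank_le_card; apply: Mmat. Qed.

Lemma rk_attained (G : graph) : is_graph G ->
  exists2 T, T `<=` G & indep M T /\ rk M G = #|` T|.
Proof.
case: hM => Mmat _ _ gG; have [T TG [MT rkT]] := matroid_rank_attained (Mmat G gG).
by exists T; rewrite -?(indepE gG TG).
Qed.

Lemma circuitP (G : graph) : is_graph G ->
  circuit M G <-> ~~ indep M G /\ {in G, forall e, indep M (G `\ e)}.
Proof.
move=> gG; have rkGe e : e \in G -> (rk M (G `\ e) == #|` G| - 1) = indep M (G `\ e).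
  move=> eG; rewrite -rk_eq_card; last exact: is_graph_sub gG (fsubD1set _ _).
  by rewrite [in #|` G|](cardfsD1 e) eG add1n subn1.
rewrite /circuit ltn_neqAle rk_le_card // andbT rk_eq_card //.
split=> -[dG Ge]; split=> // e eG; first by rewrite -rkGe // Ge.
by apply/eqP; rewrite rkGe // Ge.
Qed.

End GraphMatroidFamily.

Definition star_on (c : nat) (S : {fset nat}) : graph := (fun x => [fset c; x]) @` S.

Definition fiota (a k : nat) : {fset nat} := [fset x | x in iota a k].

Lemma mem_fiota a k x : (x \in fiota a k) = (a <= x < a + k).
Proof. by rewrite !inE mem_iota. Qed.

Lemma card_fiota a k : #|` fiota a k| = k.
Proof. by rewrite card_fseq undup_id ?iota_uniq // size_iota. Qed.

Lemma star_on_fiota m : star m = star_on 0 (fiota 1 m).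
Proof. by []. Qed.

Lemma mem_star_on c S e : reflect (exists2 x, x \in S & e = [fset c; x]) (e \in star_on c S).
Proof. exact: (iffP (imfsetP _ _ _ _)). Qed.

Lemma vertices_star_on c S : vertices (star_on c S) `<=` c |` S.
Proof.
apply/fsubsetP => x /verticesP [_ /mem_star_on [y yS ->]] /fset2P [] ->.
  exact: fset1U1.
by rewrite inE yS orbT.
Qed.

Section StarOn.
Variables (c : nat) (S : {fset nat}).
Hypothesis cS : c \notin S.

Lemma is_graph_star_on : is_graph (star_on c S).
Proof.
move=> e /mem_star_on [x xS ->]; rewrite cardfs2; case: eqP => // cx.
by move: cS; rewrite cx xS.
Qed.

Lemma star_on_leaf_inj x y : x \in S -> y \in S -> [fset c; x] = [fset c; y] -> x = y.
Proof.
move=> xS yS cxy; have : x \in [fset c; y] by rewrite -cxy fset22.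
by case/fset2P => // xc; move: cS; rewrite -xc xS.
Qed.

Lemma card_star_on : #|` star_on c S| = #|` S|.
Proof. by rewrite card_in_imfset //; apply: star_on_leaf_inj. Qed.

Lemma star_onD1 x : x \in S -> star_on c S `\ [fset c; x] = star_on c (S `\ x).
Proof.
move=> xS; apply/fsetP => e; apply/fsetD1P/mem_star_on.
  case=> ecx /mem_star_on [y yS eE]; exists y => //; apply/fsetD1P; split => //.
  by apply: contraNneq ecx => yx; rewrite eE yx.
case=> y /fsetD1P [yx yS] ->; split; last by apply/mem_star_on; exists y.
by apply: contra_neq yx; apply: star_on_leaf_inj.
Qed.

End StarOn.

Lemma gmap_star_on f c S : gmap f (star_on c S) = star_on (f c) (f @` S).
Proof.
apply/fsetP => e; apply/imfsetP/mem_star_on.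
  case=> _ /mem_star_on [x xS ->] ->; exists (f x); first exact: in_imfset.
  by rewrite imfset_fset2.
case=> _ /imfsetP [x /= xS ->] ->; exists [fset c; x]; last by rewrite imfset_fset2.
by apply/mem_star_on; exists x.
Qed.

Lemma star_on_iso c S c' S' : c \notin S -> c' \notin S' -> #|` S| = #|` S'| ->
  exists f, graph_iso f (star_on c S) (star_on c' S').
Proof.
(* Off S, [index z S] is out of range, so [f] sends the centre [c] to the default [c']. *)
move=> cS cS' SS'; pose f z := nth c' S' (index z S).
have fS z : z \in S -> f z \in S'.
  by move=> zS; apply: mem_nth; rewrite -SS' index_mem.
have fc : f c = c' by rewrite /f nth_default // -SS' memNindex.
have fSS' : f @` S = S'.
  apply/fsetP => y; apply/imfsetP/idP => [[z /= zS ->]|yS']; first exact: fS.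
  have yS : index y S' < size S by rewrite SS' index_mem.
  exists (nth c S (index y S')); first exact: mem_nth.
  by rewrite /f index_uniq ?fset_uniq // nth_index.
have finj : {in c |` S &, injective f}.
  have fSc z : z \in S -> f z != c' by move=> /fS; apply: contraTneq => ->.
  move=> x y /fset1UP [-> | xS] /fset1UP [-> | yS] //; rewrite ?fc.
  - by move=> /esym /eqP; rewrite (negPf (fSc y yS)).
  - by move=> /eqP; rewrite (negPf (fSc x xS)).
  move=> /eqP; rewrite /f nth_uniq ?fset_uniq -?SS' ?index_mem // => /eqP xy.
  by rewrite -(nth_index c xS) -(nth_index c yS) xy.
exists f; rewrite -fc -fSS' -gmap_star_on; apply: graph_iso_gmap.
by move=> x y /(fsubsetP (vertices_star_on c S)) + /(fsubsetP (vertices_star_on c S)); apply: finj.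
Qed.

Lemma isomorphic_star_on c S : c \notin S -> isomorphic (star_on c S) (star #|` S|).
Proof.
move=> cS; rewrite star_on_fiota; apply: star_on_iso; rewrite ?card_fiota //.
by rewrite mem_fiota.
Qed.

Lemma card_star m : #|` star m| = m.
Proof. by rewrite star_on_fiota card_star_on ?card_fiota // mem_fiota. Qed.

Lemma indep_star_on M c S : graph_matroid_family M -> c \notin S ->
  indep M (star_on c S) = indep M (star #|` S|).
Proof.
move=> hM cS; rewrite (indep_isomorphic hM _ (isomorphic_star_on cS)) //.
exact: is_graph_star_on.
Qed.

Lemma deg_gt0 (G : graph) v : v \in vertices G -> 0 < deg G v.
Proof.
case/verticesP => e eG ve; rewrite cardfs_gt0; apply/fset0Pn; exists e.
by rewrite !inE eG ve.
Qed.

Lemma min_deg_one_star m : 0 < m -> min_deg_one (star m).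
Proof.
move=> m0; have e01 : [fset 0; 1] \in star m.
  by apply/mem_star_on; exists 1; rewrite ?mem_fiota.
split; last by move=> v; apply: deg_gt0.
exists 1; split; first by apply/verticesP; exists [fset 0; 1]; rewrite ?fset22.
apply/eqP/cardfs1P; exists [fset 0; 1]; apply/fsetP => a; rewrite !inE.
apply/andP/eqP => [[/mem_star_on [x _ ->] /fset2P [] // <-] | ->] //.
by rewrite e01 fset22.
Qed.

Lemma star_on_centre (G : graph) u : is_graph G -> {in G, forall e, u \in e} ->
  G = star_on u (vertices G `\ u).
Proof.
move=> gG uG; apply/fsetP => e; apply/idP/mem_star_on => [eG | [z /fsetD1P [zu zV] ->]].
  have [z zu eE] := edge_other (gG e eG) (uG e eG).
  by exists z; rewrite // in_fsetD1 zu; apply/verticesP; exists e; rewrite // eE fset22.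
case/verticesP: zV => a aG za.
by rewrite -(fset2E (gG a aG) (uG a aG) za) // eq_sym.
Qed.

Definition pendant_edge (G : graph) (u v : nat) : Prop :=
  [/\ u != v, [fset u; v] \in G & {in G, forall e, v \in e -> e = [fset u; v]}].

Lemma pendant_edge_vertex (G : graph) u v : pendant_edge G u v -> u \in vertices G.
Proof. by case=> _ uvG _; apply/verticesP; exists [fset u; v]; rewrite ?fset21. Qed.

Lemma pendant_edge_of_min_deg_one (G : graph) : is_graph G -> min_deg_one G ->
  exists u v, pendant_edge G u v.
Proof.
move=> gG [[v [_ /eqP /cardfs1P [e0 Gv]]] _].
have : e0 \in [fset e in G | v \in e] by rewrite Gv fset11.
rewrite !inE => /andP [e0G ve0]; have [u uv e0E] := edge_other (gG e0 e0G) ve0.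
have {}e0E : e0 = [fset u; v] by rewrite e0E fsetUC.
exists u, v; split; rewrite -?e0E // => e eG ve.
by have /fset1P : e \in [fset e0] by rewrite -Gv !inE eG ve.
Qed.

Lemma fresh_bound (V : {fset nat}) : exists B, {in V, forall x, x < B}.
Proof. by exists (\max_(x <- V) x.+1) => x xV; apply: (leq_bigmax_seq (F := succn)). Qed.

Lemma fresh_fset (V : {fset nat}) k :
  exists2 W : {fset nat}, #|` W| = k & {in W, forall w, w \notin V}.
Proof.
have [B VB] := fresh_bound V; exists (fiota B k); first exact: card_fiota.
by move=> w; rewrite mem_fiota => /andP [Bw _]; apply/negP => /VB; rewrite ltnNge Bw.
Qed.

Lemma fresh_copy (T : graph) (V : {fset nat}) :
  exists2 f, {in vertices T &, injective f} & {in vertices (gmap f T), forall x, x \notin V}.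
Proof.
have [B VB] := fresh_bound V; exists (addn B) => [x y _ _ | z]; first exact: addnI.
by rewrite vertices_gmap => /imfsetP [x _ ->]; apply/negP => /VB; rewrite ltnNge leq_addr.
Qed.

Lemma vertices_fsetU1 e (H : graph) x :
  (x \in vertices (e |` H)) = (x \in e) || (x \in vertices H).
Proof.
apply/verticesP/orP => [[a /fset1UP [-> | aH] xa] | [xe | /verticesP [a aH xa]]].
- by left.
- by right; apply/verticesP; exists a.
- by exists e; rewrite ?fset1U1.
- by exists a; rewrite ?fset1Ur.
Qed.

Section PendantEdge.
Variable M : gm_family.
Hypothesis hM : graph_matroid_family M.

Lemma indep_move_pendant (G : graph) u v w : is_graph G -> pendant_edge G u v ->
  w \notin vertices G -> indep M ([fset u; w] |` (G `\ [fset u; v])) = indep M G.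
Proof.
move=> gG pendG wG; have [uv uvG vpend] := pendG; have uG := pendant_edge_vertex pendG.
pose f z := if z == v then w else if z == w then v else z.
have fK : involutive f.
  by move=> z; rewrite /f; do ![case: eqP => //=; try move=> ->]; move=> *; subst.
have fu : f u = u.
  by rewrite /f (negPf uv); case: eqP => // uw; move: wG; rewrite -uw uG.
have fGuv : gmap f (G `\ [fset u; v]) = G `\ [fset u; v].
  apply: gmap_id_in => x /verticesP [e /fsetD1P [euv eG] xe]; rewrite /f.
  case: eqP => [xv | _]; first by move: euv; rewrite (vpend e eG) -?xv ?eqxx.
  by case: eqP => // xw; move: wG; rewrite -xw => /verticesP []; exists e.
have fG : gmap f G = [fset u; w] |` (G `\ [fset u; v]).
  by rewrite -{1}(fsetD1K uvG) /gmap imfsetU1 -/(gmap f _) fGuv imfset_fset2 fu /f eqxx.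
by rewrite -fG indep_gmap // => x y _ _; apply: (can_inj fK).
Qed.

Section PendantCircuit.
Variables (G : graph) (u v : nat) (W : {fset nat}).
Hypotheses (gG : is_graph G) (cG : circuit M G) (pendG : pendant_edge G u v).
Hypothesis freshW : {in W, forall w, w \notin vertices G}.

Let uW : u \notin W.
Proof. by apply/negP => /freshW; rewrite (pendant_edge_vertex pendG). Qed.

Lemma pendant_circuit_indep_card (Y : graph) : indep M Y ->
  Y `<=` (G `\ [fset u; v]) `|` star_on u W -> #|` Y| < #|` G|.
Proof.
move=> iY YGW; have [_ uvG _] := pendG; have [dG Gind] := (circuitP hM gG).1 cG.
have gGuv : is_graph (G `\ [fset u; v]) by apply: is_graph_sub gG (fsubD1set _ _).
have gY : is_graph Y.
  by apply: is_graph_sub YGW; apply: is_graphU gGuv (is_graph_star_on uW).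
rewrite ltnNge; apply/negP => GY.
have cardGuv : #|` G `\ [fset u; v]| < #|` Y|.
  by move: GY; rewrite [#|` G|](cardfsD1 [fset u; v]) uvG.
have [y /fsetDP [yY yGuv] iy] := indep_aug hM gGuv gY (Gind _ uvG) iY cardGuv.
case/fsetUP: (fsubsetP YGW y yY) => [yGuv' | /mem_star_on [w wW yE]].
  by rewrite yGuv' in yGuv.
by move: iy; rewrite yE indep_move_pendant ?freshW // (negPf dG).
Qed.

Lemma pendant_circuit_dep_edge a : a \in G -> a != [fset u; v] ->
  #|` W| = #|` G| - 1 -> ~~ indep M (a |` star_on u W).
Proof.
move=> aG auv cardW; apply/negP => ia.
have aS : a \notin star_on u W.
  apply/mem_star_on => -[w wW aE]; move/negP: (freshW wW); apply.
  by apply/verticesP; exists a; rewrite // aE fset22.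
have sub : a |` star_on u W `<=` (G `\ [fset u; v]) `|` star_on u W.
  by rewrite fsubUset fsub1set !inE auv aG /= fsubsetUr.
have G0 : 0 < #|` G| by rewrite cardfs_gt0; apply/fset0Pn; exists a.
have := pendant_circuit_indep_card ia sub.
by rewrite cardfsU1 aS card_star_on // cardW subn1 add1n prednK // ltnn.
Qed.

End PendantCircuit.

Lemma star_dep_of_pendant_circuit (G : graph) u v : is_graph G -> circuit M G ->
  pendant_edge G u v -> ~~ indep M (star #|` G|).
Proof.
move=> gG cG pendG; have [W cardW freshW] := fresh_fset (vertices G) #|` G|.
have uW : u \notin W by apply/negP => /freshW; rewrite (pendant_edge_vertex pendG).
rewrite -cardW -(indep_star_on hM uW); apply/negP => iS.
have := pendant_circuit_indep_card gG cG pendG freshW iS (fsubsetUr _ _).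
by rewrite card_star_on // cardW ltnn.
Qed.

Lemma indep_move_disjoint_edge (H : graph) x y p q : is_graph H -> x != y -> p != q ->
  x \notin vertices H -> y \notin vertices H -> p \notin vertices H -> q \notin vertices H ->
  indep M ([fset p; q] |` H) = indep M ([fset x; y] |` H).
Proof.
move=> gH xy pq xH yH pH qH.
pose h z := if z == x then p else if z == y then q else z.
pose g z := if z == p then x else if z == q then y else z.
have hx : h x = p by rewrite /h eqxx.
have hy : h y = q by rewrite /h ifN_eqC // eqxx.
have gp : g p = x by rewrite /g eqxx.
have gq : g q = y by rewrite /g ifN_eqC // eqxx.
have off a z : a \notin vertices H -> z \in vertices H -> (z == a) = false.
  by move=> aH zH; apply/negP => /eqP za; rewrite -za zH in aH.
have hH : {in vertices H, h =1 id} by move=> z zH; rewrite /h !(off x) ?(off y).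
have hK : {in vertices ([fset x; y] |` H), cancel h g}.
  move=> z; rewrite vertices_fsetU1 => /orP [/fset2P [] -> | zH].
  - by rewrite hx gp.
  - by rewrite hy gq.
  by rewrite hH // /g !(off p) ?(off q).
have gxyH : is_graph ([fset x; y] |` H).
  by move=> e /fset1UP [-> | /gH //]; rewrite cardfs2 xy.
have hxyH : gmap h ([fset x; y] |` H) = [fset p; q] |` H.
  by rewrite /gmap imfsetU1 -/(gmap h H) gmap_id_in // imfset_fset2 hx hy.
by rewrite -hxyH indep_gmap //; apply: can_in_inj hK.
Qed.

End PendantEdge.

Lemma is_graph_K n : is_graph (K n).
Proof. by move=> e; rewrite !inE => /andP [_ /eqP]. Qed.

Section FirstDependentStar.
Variables (M : gm_family) (m : nat).
Hypothesis hM : graph_matroid_family M.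
Hypothesis dep_m : ~~ indep M (star m).
Hypothesis indep_lt : forall k, k < m -> indep M (star k).

Lemma first_dependent_star_circuit : circuit M (star m).
Proof.
have O_fiota : 0 \notin fiota 1 m by rewrite mem_fiota.
rewrite star_on_fiota; apply/(circuitP hM (is_graph_star_on O_fiota)); split => //.
move=> _ /mem_star_on [x xS ->].
have O_fiotaD1 : 0 \notin fiota 1 m `\ x by rewrite inE (negPf O_fiota) andbF.
rewrite star_onD1 // indep_star_on //; apply: indep_lt.
by have := cardfsD1 x (fiota 1 m); rewrite xS card_fiota => {2}->.
Qed.

Lemma first_dependent_star_le (G : graph) u v : is_graph G -> circuit M G ->
  pendant_edge G u v -> m <= #|` G|.
Proof.
move=> gG cG pendG; rewrite leqNgt.
by apply: contra (star_dep_of_pendant_circuit hM gG cG pendG); apply: indep_lt.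
Qed.

Variable T : graph.
Hypotheses (gT : is_graph T) (iT : indep M T) (mT : m <= #|` T|).

Lemma first_dependent_star_gt1 : 1 < m.
Proof.
have m0 : 0 < m.
  rewrite lt0n; apply: contraNneq dep_m => ->.
  by rewrite (_ : star 0 = fset0) ?indep0 //; apply: cardfs0_eq; rewrite card_star.
rewrite ltn_neqAle m0 andbT eq_sym; apply: contraNneq dep_m => ->.
have /fset0Pn [e eT] : T != fset0 by rewrite -cardfs_gt0 (leq_trans m0 mT).
have [p [q [pq eE]]] := card2P (gT eT).
rewrite -(cardfs1 q) -(indep_star_on hM (c := p)) ?inE // /star_on imfset_fset1 -eE.
by apply: (indep_sub hM gT iT); rewrite fsub1set.
Qed.

Section MinimalPendantCircuit.
Variables (G : graph) (u v : nat).
Hypotheses (gG : is_graph G) (cG : circuit M G) (pendG : pendant_edge G u v).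
Hypothesis Gm : #|` G| = m.

Lemma minimal_pendant_circuit_centre : {in G, forall a, u \in a}.
Proof.
move=> a aG; apply: contraT => ua.
have auv : a != [fset u; v] by apply: contraNneq ua => ->; rewrite fset21.
have [W cardW freshW] := fresh_fset (vertices G) m.-1.
have uW : u \notin W by apply/negP => /freshW; rewrite (pendant_edge_vertex pendG).
have dep_a : ~~ indep M (a |` star_on u W).
  by apply: (pendant_circuit_dep_edge hM gG cG pendG freshW aG auv); rewrite cardW Gm subn1.
have m0 : 0 < m by rewrite -Gm cardfs_gt0; apply/fset0Pn; exists a.
have iS : indep M (star_on u W).
  by rewrite indep_star_on // cardW; apply: indep_lt; rewrite prednK.
have [f finj freshT'] := fresh_copy T (vertices (star_on u W)).
have gT' := is_graph_gmap gT finj.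
have cardT' : #|` star_on u W| < #|` gmap f T|.
  by rewrite card_star_on // cardW card_gmap // (leq_trans _ mT) // prednK.
have iT' : indep M (gmap f T) by rewrite indep_gmap.
have [z /fsetDP [zT' _] iz] := indep_aug hM (is_graph_star_on uW) gT' iS iT' cardT'.
have [x [y [xy aE]]] := card2P (gG aG); have [p [q [pq zE]]] := card2P (gT' _ zT').
have aS r : r \in a -> r \notin vertices (star_on u W).
  move=> ra; apply/negP => /(fsubsetP (vertices_star_on u W)) /fset1UP [ru | rW].
    by move: ua; rewrite -ru ra.
  by move/negP: (freshW r rW); apply; apply/verticesP; exists a.
have zS r : r \in z -> r \notin vertices (star_on u W).
  by move=> rz; apply: freshT'; apply/verticesP; exists z.
move: dep_a iz; rewrite aE zE (indep_move_disjoint_edge hM (is_graph_star_on uW) xy pq).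
- by move/negP.
all: by [apply: aS; rewrite aE (fset21, fset22) | apply: zS; rewrite zE (fset21, fset22)].
Qed.

Lemma minimal_pendant_circuit_isomorphic_star : isomorphic G (star m).
Proof.
have uV : u \notin vertices G `\ u by rewrite !inE eqxx.
have GE := star_on_centre gG minimal_pendant_circuit_centre.
by rewrite -Gm GE card_star_on //; apply: isomorphic_star_on.
Qed.

End MinimalPendantCircuit.

End FirstDependentStar.

Theorem proposition2p5 (M : gm_family) (L : nat) :
  graph_matroid_family M -> bounded M -> limit_rank M L ->
  (exists G, is_graph G /\ small_circuit M L G /\ min_deg_one G) ->
  exists m, 2 <= m /\
    (small_circuit M L (star m) /\ #|` star m| <= m /\ min_deg_one (star m)) /\
    (forall G, is_graph G -> small_circuit M L G -> #|` G| <= m ->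
       min_deg_one G -> isomorphic G (star m)).
Proof.
move=> hM _ [N rkK] [G0 [gG0 [[cG0 G0L] md0]]].
have [u0 [v0 pend0]] := pendant_edge_of_min_deg_one gG0 md0.
have dep0 := star_dep_of_pendant_circuit hM gG0 cG0 pend0.
have [m dep_m min_m] := ex_minnP (ex_intro (fun k => ~~ indep M (star k)) _ dep0).
have indep_lt k : k < m -> indep M (star k).
  by move=> km; apply: contraTT km; rewrite -leqNgt; apply: min_m.
have [T TK [iT rkT]] := rk_attained hM (@is_graph_K N).
have gT := is_graph_sub (@is_graph_K N) TK.
have mL : m <= L := leq_trans (min_m _ dep0) G0L.
have mT : m <= #|` T| by rewrite -rkT rkK.
have m2 := first_dependent_star_gt1 hM dep_m gT iT mT.
exists m; split=> //; split.
  split; first by split; [exact: first_dependent_star_circuit | rewrite card_star].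
  by rewrite card_star; split=> //; apply: min_deg_one_star; apply: ltnW.
move=> G gG [cG _] Gm mdG; have [u [v pendG]] := pendant_edge_of_min_deg_one gG mdG.
apply: (minimal_pendant_circuit_isomorphic_star hM indep_lt gT iT mT gG cG pendG).
by apply/eqP; rewrite eqn_leq Gm (first_dependent_star_le hM indep_lt gG cG pendG).
Qed.
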